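(* With $C$, $C^0=C\setminus C(\mathbb F_{p^2})$ and $\mathrm{End}(t)=\{A\in\mathrm{Mat}_3(\mathbb F_{p^2}):A\cdot t\in k\cdot t\}$ for $t\in C^0(k)$ (viewed as a column vector), one has \[\{t\in C^0(k):\mathrm{End}(t)\simeq\mathbb F_{p^6}\}=C^0(\mathbb F_{p^6}).\]
   Context: $k$ is algebraically closed of characteristic $p$ and $C\subset\mathbb P^2$ is the Fermat curve $X_1^{p+1}+X_2^{p+1}+X_3^{p+1}=0$. *)

From HB Require Import structures.
From mathcomp Require Import all_boot all_order all_algebra.
Set Implicit Arguments. Unset Strict Implicit. Unset Printing Implicit Defensive.
Import GRing.Theory.
Local Open Scope ring_scope.

Definition in_Fq (k : fieldType) (q : nat) (x : k) : Prop := x ^+ q = x.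

(* A point of P^2(k) is represented by a nonzero column vector t (up to scaling).
   It is F_q-rational iff some nonzero multiple of t has all coordinates in F_q. *)
Definition rat_pt (k : fieldType) (q : nat) (t : 'cV[k]_3) : Prop :=
  exists c : k, c != 0 /\ forall i : 'I_3, in_Fq q (c * t i ord0).

Definition on_fermat (k : fieldType) (p : nat) (t : 'cV[k]_3) : Prop :=
  \sum_(i < 3) (t i ord0) ^+ p.+1 = 0.

Definition in_End (k : fieldType) (p : nat) (t : 'cV[k]_3) (A : 'M[k]_3) : Prop :=
  (forall i j : 'I_3, in_Fq (p ^ 2)%N (A i j)) /\ exists c : k, A *m t = c *: t.

Definition End_iso_Fp6 (k : fieldType) (p : nat) (t : 'cV[k]_3) : Prop :=
  exists (F : finFieldType) (f : F -> 'M[k]_3),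
    #|F| = (p ^ 6)%N /\
    f 1 = 1 /\
    (forall x y, f (x + y) = f x + f y) /\
    (forall x y, f (x * y) = f x * f y) /\
    injective f /\
    (forall A, in_End p t A <-> exists x, f x = A).

(* An element of F_(p^6) outside F_(p^2) acts on a point t with End(t) ~ F_(p^6)
   through a matrix A over F_(p^2) with t as eigenvector, for an eigenvalue c of
   degree 3 over F_(p^2).  Since A commutes with the coordinatewise Frobenius
   t |-> t^(p^2), the conjugates t, t^(p^2), t^(p^4) are eigenvectors for the
   distinct eigenvalues c, c^(p^2), c^(p^4), so every eigenspace of A is a line;
   t^(p^6), an eigenvector for c^(p^6) = c, is therefore proportional to t, which
   makes t rational over F_(p^6).
   Conversely, if s is an F_(p^6)-rational point of the curve that is not
   F_(p^2)-rational, then s, s^(p^2), s^(p^4) form a basis, and End(s) consists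
   exactly of the matrices acting on this frame by x, x^(p^2), x^(p^4) for x in
   the subfield F_(p^6) of k. *)

From HB Require Import structures.
From mathcomp Require Import all_boot all_order all_algebra all_field.
From mathcomp Require Import ring zify.
Set Implicit Arguments. Unset Strict Implicit. Unset Printing Implicit Defensive.
Import GRing.Theory.
Local Open Scope ring_scope.

(* The characteristic hypothesis is an argument so that [frob hp n] carries a
   canonical ring morphism structure, as [pFrobenius_aut] does. *)
Definition frob (k : fieldType) (p : nat) of p \in [pchar k] :=
  fun n (x : k) => x ^+ (p ^ n).

Section IteratedFrobenius.
Variables (k : fieldType) (p : nat) (hp : p \in [pchar k]).
Local Notation frob := (frob hp).
Local Notation "A ^[ n ]" := (map_mx (frob n) A) (at level 2, format "A ^[ n ]").

Lemma pexpn_gt0 n : (0 < p ^ n)%N.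
Proof. by rewrite expn_gt0 prime_gt0 ?(pcharf_prime hp). Qed.

Lemma pexpn_gt1 n : (0 < n)%N -> (1 < p ^ n)%N.
Proof. by move=> n_gt0; rewrite -(expn0 p) ltn_exp2l ?prime_gt1 ?(pcharf_prime hp). Qed.

Lemma frob_is_nmod_morphism n : nmod_morphism (frob n).
Proof.
split=> [|x y]; first by rewrite /frob expr0n eqn0Ngt pexpn_gt0.
apply: exprDn_pchar; rewrite pnatX (eq_pnat _ (pcharf_eq hp)).
by rewrite pnat_id ?(pcharf_prime hp).
Qed.

Lemma frob_is_monoid_morphism n : monoid_morphism (frob n).
Proof. by split=> [|x y]; rewrite /frob ?expr1n ?exprMn. Qed.

HB.instance Definition _ n :=
  GRing.isNmodMorphism.Build k k (frob n) (frob_is_nmod_morphism n).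
HB.instance Definition _ n :=
  GRing.isMonoidMorphism.Build k k (frob n) (frob_is_monoid_morphism n).

Lemma frob0 x : frob 0 x = x.
Proof. by rewrite /frob expr1. Qed.

Lemma frob_comp m n x : frob m (frob n x) = frob (n + m) x.
Proof. by rewrite /frob -exprM -expnD. Qed.

Lemma frob_fixM m j x : frob m x = x -> frob (m * j) x = x.
Proof.
move=> fx; elim: j => [|j IH]; first by rewrite muln0 frob0.
by rewrite mulnS -frob_comp fx IH.
Qed.

Lemma map_mx_frob0 a b (A : 'M[k]_(a, b)) : A^[0] = A.
Proof. by apply: map_mx_id; exact: frob0. Qed.

Lemma map_mx_frob_comp m n a b (A : 'M[k]_(a, b)) : A^[n]^[m] = A^[n + m].
Proof. by rewrite -map_mx_comp; apply: eq_map_mx => x; exact: frob_comp. Qed.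

Lemma map_mx_frob_fixM m j a b (A : 'M[k]_(a, b)) : A^[m] = A -> A^[m * j] = A.
Proof.
move=> fA; apply/matrixP => i l; rewrite mxE frob_fixM //.
by have /matrixP/(_ i l) := fA; rewrite mxE.
Qed.

Lemma eigenvector_map_frob m n (B : 'M[k]_n) (v : 'cV_n) c :
  B^[m] = B -> B *m v = c *: v -> B *m v^[m] = frob m c *: v^[m].
Proof. by move=> fB Bv; rewrite -{1}fB -map_mxM Bv map_mxZ. Qed.

Lemma rat_pt_frobP n (t : 'cV[k]_3) :
  rat_pt (p ^ n) t <-> exists2 c, c != 0 & (c *: t)^[n] = c *: t.
Proof.
split=> [[c [c0 ct]] | [c c0 /matrixP ct]]; exists c => //.
  by apply/matrixP => i j; rewrite ord1 !mxE; exact: ct.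
by split=> // i; have := ct i ord0; rewrite !mxE.
Qed.

Lemma rat_pt_map_frob m n (t : 'cV[k]_3) : rat_pt (p ^ n) t -> rat_pt (p ^ n) t^[m].
Proof.
case/rat_pt_frobP => c c0 ct; apply/rat_pt_frobP; exists (frob m c).
  by rewrite fmorph_eq0.
by rewrite -map_mxZ map_mx_frob_comp addnC -map_mx_frob_comp ct.
Qed.

Lemma frob_orbit_inj c :
  frob 6 c = c -> frob 2 c != c -> injective (fun j : 'I_3 => frob (2 * j) c).
Proof.
move=> c6 c2.
have c4 : frob 4 c != c.
  by apply: contra_neq c2 => c4; rewrite -[in RHS]c6 -[6%N]/(4 + 2)%N -frob_comp c4.
have c24 : frob 2 c != frob 4 c.
  by apply: contra_neq c2 => /esym; rewrite -[4%N]/(2 + 2)%N -frob_comp => /fmorph_inj.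
case=> [[|[|[|//]]] i3] [[|[|[|//]]] j3] /= e; apply: val_inj => //=; move/eqP: e;
  rewrite ?muln0 ?muln1 ?frob0 -?[(2 * 2)%N]/4%N;
  by rewrite ?(eq_sym c) ?(negbTE c2) ?(negbTE c4) ?(eq_sym (frob 4 c)) ?(negbTE c24).
Qed.

End IteratedFrobenius.

Lemma rat_ptZ (k : fieldType) q c (t : 'cV[k]_3) :
  c != 0 -> rat_pt q (c *: t) <-> rat_pt q t.
Proof.
move=> c0; split=> [[d [d0 hd]] | [d [d0 hd]]].
  exists (d * c); split=> [|i]; first by rewrite mulf_neq0.
  by rewrite -mulrA; have := hd i; rewrite mxE.
exists (d / c); split=> [|i]; first by rewrite mulf_neq0 ?invr_eq0.
by rewrite mxE mulrA divfK.
Qed.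

Lemma closed_field_root (k : closedFieldType) m (a : k) :
  (0 < m)%N -> exists x, x ^+ m = a.
Proof.
move=> m_gt0; have [x xm] := @solve_monicpoly k m (fun i => if i == 0%N then a else 0) m_gt0.
exists x; rewrite xm (bigD1 (Ordinal m_gt0)) //= big1 ?addr0 ?mulr1 //.
by move=> -[[|i] ?] //= _; rewrite mul0r.
Qed.

Lemma exists_nonfixed_pow (F : finFieldType) N :
  (1 < N < #|F|)%N -> exists x : F, x ^+ N != x.
Proof.
case/andP=> N_gt1 N_lt; apply/existsP; apply: contraLR N_lt => /existsPn all_fixed.
have sizeP : size ('X^N - 'X : {poly F}) = N.+1.
  by rewrite size_addl size_polyXn // size_opp size_polyX.
rewrite -leqNgt -ltnS -sizeP cardE max_poly_roots ?enum_uniq //.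
  by rewrite -size_poly_gt0 sizeP.
apply/allP => x _; rewrite /root !hornerE subr_eq0.
by have := all_fixed x; rewrite negbK.
Qed.

Lemma eigenvector_unique (k : fieldType) n (A : 'M[k]_n) (cc : 'I_n -> k)
    (v : 'I_n -> 'cV_n) :
  injective cc -> (forall j, v j != 0) -> (forall j, A *m v j = cc j *: v j) ->
  forall j w, A *m w = cc j *: w -> exists l, w = l *: v j.
Proof.
move=> cc_inj v0 Av j w Aw.
pose E l := eigenspace A^T (cc l).
have eigT l (u : 'cV_n) : A *m u = cc l *: u -> (u^T <= E l)%MS.
  by move=> Au; apply/eigenspaceP; rewrite -trmx_mul Au linearZ.
have rank_ge1 l : (1 <= \rank (E l))%N.
  by apply: leq_trans (mxrankS (eigT _ _ (Av l))); rewrite rank_rV trmx_eq0 v0.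
have rank_sum : (\sum_l \rank (E l) <= n)%N.
  have := mxdirect_sum_eigenspace A^T (P := predT) (fun l1 l2 _ _ => @cc_inj l1 l2).
  by rewrite mxdirectE /= => /eqP <-; exact: rank_leq_col.
have rank1 : \rank (E j) = 1%N.
  have : (\sum_(l | l != j) 1 <= \sum_(l | l != j) \rank (E l))%N by exact: leq_sum.
  rewrite sum1_card cardC1 card_ord; move: rank_sum; rewrite (bigD1 j) //=.
  by move: (rank_ge1 j) (ltn_ord j); lia.
have /sub_rVP[l wl] : (w^T <= (v j)^T)%MS.
  apply: submx_trans (eigT _ _ Aw) _; have vE := eigT _ _ (Av j).
  by rewrite -(mxrank_leqif_sup vE).2 rank1 rank_rV trmx_eq0 v0.
by exists l; apply: trmx_inj; rewrite wl linearZ.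
Qed.

Lemma scalemx_injl (k : fieldType) m n (t : 'M[k]_(m, n)) :
  t != 0 -> injective (fun a : k => a *: t).
Proof.
move=> t0 a b /eqP; rewrite -subr_eq0 -scalerBl scalemx_eq0 (negbTE t0) orbF subr_eq0.
by move/eqP.
Qed.

Lemma eigenvectorX (k : fieldType) n (A : 'M[k]_n) (t : 'cV_n) c m :
  A *m t = c *: t -> A ^+ m *m t = c ^+ m *: t.
Proof.
move=> At; elim: m => [|m IH]; first by rewrite !expr0 scale1r mul1mx.
by rewrite exprS -[A * _]/(A *m A ^+ m) -mulmxA IH -scalemxAr At scalerA -exprSr.
Qed.

Definition i0 : 'I_3 := @Ordinal 3 0 isT.
Definition i1 : 'I_3 := @Ordinal 3 1 isT.
Definition i2 : 'I_3 := @Ordinal 3 2 isT.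

Lemma ord3P (i : 'I_3) : [\/ i = i0, i = i1 | i = i2].
Proof.
by case: i => [[|[|[|//]]] ?]; [constructor 1|constructor 2|constructor 3]; exact: val_inj.
Qed.

Lemma big_ord3 (R : nmodType) (F : 'I_3 -> R) : \sum_(i < 3) F i = F i0 + F i1 + F i2.
Proof.
by rewrite !big_ord_recl big_ord0 addr0 addrA; congr (F _ + F _ + F _); exact: val_inj.
Qed.

Section CrossProduct.
Variable k : fieldType.
Implicit Types u v w a b c : 'cV[k]_3.
Local Notation "u `c i" := (u i ord0) (at level 3, i at level 2, format "u `c i").

Definition dot u v := \sum_(i < 3) u`c i * v`c i.
Definition cross u v : 'cV[k]_3 := \col_i
  (if i == i0 then u`c i1 * v`c i2 - u`c i2 * v`c i1
   else if i == i1 then u`c i2 * v`c i0 - u`c i0 * v`c i2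
   else u`c i0 * v`c i1 - u`c i1 * v`c i0).

Lemma dotE u v : dot u v = u`c i0 * v`c i0 + u`c i1 * v`c i1 + u`c i2 * v`c i2.
Proof. exact: big_ord3. Qed.

Lemma col3P u v : u`c i0 = v`c i0 -> u`c i1 = v`c i1 -> u`c i2 = v`c i2 -> u = v.
Proof. by move=> ? ? ?; apply/matrixP => i j; rewrite ord1; case: (ord3P i) => ->. Qed.

Lemma dotC u v : dot u v = dot v u.
Proof. by rewrite !dotE; ring. Qed.

Lemma dot_crossr a b : dot b (cross a b) = 0.
Proof. by rewrite dotE !mxE /=; ring. Qed.

Lemma crossC a b : cross a b = - cross b a.
Proof. by apply: col3P; rewrite !mxE /=; ring. Qed.

Lemma cross_cross w a b : cross w (cross a b) = dot w b *: a - dot w a *: b.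
Proof. by apply: col3P; rewrite !mxE /= !dotE; ring. Qed.

Lemma cross0r v : cross v 0 = 0.
Proof. by apply: col3P; rewrite !mxE /=; ring. Qed.

Lemma cross_eq0_scale v u : u != 0 -> cross v u = 0 -> exists l, v = l *: u.
Proof.
case/matrix0Pn => i [j]; rewrite ord1 => ui0 vu0.
pose e : 'cV[k]_3 := delta_mx i ord0.
have dot_e w : dot e w = w`c i.
  rewrite /dot (bigD1 i) //= big1 => [|l /negbTE li]; rewrite !mxE ?li ?eqxx /=.
    by rewrite mul1r addr0.
  by rewrite mul0r.
have := cross_cross e v u; rewrite vu0 cross0r !dot_e => /esym/eqP.
rewrite subr_eq0 => /eqP uv; exists (v`c i / u`c i).
by rewrite mulrC -scalerA -uv scalerA mulVf // scale1r.
Qed.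

Lemma map_dot (f : {rmorphism k -> k}) u v : f (dot u v) = dot (map_mx f u) (map_mx f v).
Proof. by rewrite !dotE !mxE !rmorphD !rmorphM. Qed.

Lemma map_cross (f : {rmorphism k -> k}) u v :
  map_mx f (cross u v) = cross (map_mx f u) (map_mx f v).
Proof. by apply: col3P; rewrite !mxE /= rmorphB !rmorphM. Qed.

End CrossProduct.

Section PrescribedEigenvectors.
Variable k : fieldType.
Implicit Types a b c : 'cV[k]_3.

Definition mx_cols a b c : 'M[k]_3 :=
  \matrix_(i, j) (if j == i0 then a i ord0 else if j == i1 then b i ord0 else c i ord0).

(* Cramer's rule: the rows of the inverse are the cross products, over the triple product. *)
Definition mx_cols_inv a b c : 'M[k]_3 := (dot c (cross a b))^-1 *:
  \matrix_(j, i) (if j == i0 then cross b c i ord0 else if j == i1 then cross c a i ord0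
                  else cross a b i ord0).

Lemma mulmx_cols (X : 'M[k]_3) a b c : X *m mx_cols a b c = mx_cols (X *m a) (X *m b) (X *m c).
Proof.
apply/matrixP => i j; rewrite !mxE.
by case: (ord3P j) => ->; apply: eq_bigr => l _; rewrite mxE.
Qed.

Lemma mx_cols_inj a b c a' b' c' :
  mx_cols a b c = mx_cols a' b' c' -> [/\ a = a', b = b' & c = c'].
Proof.
move/matrixP=> e; split; apply/matrixP => i j; rewrite ord1.
- by have := e i i0; rewrite !mxE.
- by have := e i i1; rewrite !mxE.
- by have := e i i2; rewrite !mxE.
Qed.

Lemma mx_cols_invK a b c :
  dot c (cross a b) != 0 -> mx_cols_inv a b c *m mx_cols a b c = 1%:M.
Proof.
move=> D0; apply/matrixP => i j; rewrite !mxE big_ord3 !mxE /=.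
by case: (ord3P i) => ->; case: (ord3P j) => ->; rewrite /= ?mxE /=;
  move: D0; rewrite dotE !mxE /= => D0; field.
Qed.

Lemma eq_mx_on_cols a b c (X Y : 'M[k]_3) : dot c (cross a b) != 0 ->
  X *m a = Y *m a -> X *m b = Y *m b -> X *m c = Y *m c -> X = Y.
Proof.
move=> /mx_cols_invK/mulmx1C D ha hb hc.
by rewrite -[X]mulmx1 -[Y]mulmx1 -D !mulmxA !mulmx_cols ha hb hc.
Qed.

Definition eigen_mx a b c la lb lc :=
  mx_cols (la *: a) (lb *: b) (lc *: c) *m mx_cols_inv a b c.

Lemma eigen_mxP a b c la lb lc : dot c (cross a b) != 0 ->
  let M := eigen_mx a b c la lb lc in
  [/\ M *m a = la *: a, M *m b = lb *: b & M *m c = lc *: c].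
Proof.
move=> D0 M; apply: mx_cols_inj; rewrite -mulmx_cols.
by rewrite -mulmxA mx_cols_invK // mulmx1.
Qed.

End PrescribedEigenvectors.

Section FiniteSubfield.
Variables (k : closedFieldType) (p : nat) (hp : p \in [pchar k]) (n : nat).

(* The degree is n.+1, so that the fixed points form a finite field for every n. *)
Definition frob_fixed : {pred k} := fun x => frob hp n.+1 x == x.

Lemma frob_fixed_divring_closed : divring_closed frob_fixed.
Proof.
split=> [|x y|x y]; rewrite !unfold_in /frob_fixed /= ?rmorph1 //.
  by rewrite rmorphB /= => /eqP -> /eqP ->.
by rewrite rmorphM fmorphV /= => /eqP -> /eqP ->.
Qed.

HB.instance Definition _ := GRing.isDivringClosed.Build k frob_fixed
  frob_fixed_divring_closed.

Record GF := MkGF { gf_val :> k; gf_valP : gf_val \in frob_fixed }.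

HB.instance Definition _ := [isSub for gf_val].
HB.instance Definition _ := [Choice of GF by <:].
HB.instance Definition _ := [SubChoice_isSubIntegralDomain of GF by <:].
HB.instance Definition _ := [SubIntegralDomain_isSubField of GF by <:].

Definition frob_poly : {poly k} := 'X^(p ^ n.+1) - 'X.
Definition frob_roots : seq k := sval (closed_field_poly_normal frob_poly).

Lemma size_frob_poly : size frob_poly = (p ^ n.+1).+1.
Proof. by rewrite size_addl size_polyXn // size_opp size_polyX ltnS (pexpn_gt1 hp). Qed.

Lemma frob_poly_neq0 : frob_poly != 0.
Proof. by rewrite -size_poly_gt0 size_frob_poly. Qed.

Lemma frob_roots_spec :
  frob_poly = lead_coef frob_poly *: \prod_(z <- frob_roots) ('X - z%:P).
Proof. exact: svalP (closed_field_poly_normal frob_poly). Qed.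

Lemma mem_frob_roots x : (x \in frob_roots) = (x \in frob_fixed).
Proof.
have -> : (x \in frob_fixed) = root frob_poly x.
  by rewrite /root /frob_poly !hornerE subr_eq0.
rewrite [X in root X _]frob_roots_spec rootZ ?root_prod_XsubC //.
by rewrite lead_coef_eq0 frob_poly_neq0.
Qed.

Lemma size_frob_roots : size frob_roots = (p ^ n.+1)%N.
Proof.
have /(congr1 (size : {poly k} -> nat)) := frob_roots_spec.
rewrite size_scale ?lead_coef_eq0 ?frob_poly_neq0 // size_prod_XsubC size_frob_poly.
by case.
Qed.

Lemma uniq_frob_roots : uniq frob_roots.
Proof.
have pn0 : (p ^ n.+1)%:R = 0 :> {poly k}.
  by rewrite natrX -polyC_natr (pcharf0 hp) polyC0 expr0n.
have sep : separable_poly frob_poly.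
  rewrite separable_poly.unlock /frob_poly derivB derivXn derivX -mulr_natr pn0.
  rewrite mulr0 sub0r -(scaleN1r (1 : {poly k})) coprimepZr ?coprimep1 //.
  by rewrite oppr_eq0 oner_eq0.
move: sep; rewrite frob_roots_spec (eqp_separable (eqp_scale _ _)).
  by rewrite separable_prod_XsubC.
by rewrite lead_coef_eq0 frob_poly_neq0.
Qed.

Lemma gf_val_root (x : GF) : gf_val x \in frob_roots.
Proof. by rewrite mem_frob_roots gf_valP. Qed.

Definition gf_index (x : GF) : 'I_(size frob_roots) :=
  Ordinal (etrans (index_mem _ _) (gf_val_root x)).

Lemma gf_indexK : pcancel gf_index (fun i => insub (nth 0 frob_roots i)).
Proof. by move=> x; rewrite /= nth_index ?gf_val_root // valK. Qed.

HB.instance Definition _ : isCountable GF := PCanIsCountable gf_indexK.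
HB.instance Definition _ : isFinite GF := PCanIsFinite gf_indexK.

Lemma card_GF : #|(GF : finType)| = (p ^ n.+1)%N.
Proof.
rewrite -size_frob_roots cardE -(size_map gf_val); apply: perm_size.
apply: uniq_perm; first by rewrite (map_inj_uniq val_inj) enum_uniq.
  exact: uniq_frob_roots.
move=> y; apply/mapP/idP => [[x _ ->] | y_root]; first exact: gf_val_root.
by rewrite mem_frob_roots in y_root; exists (MkGF y_root); rewrite ?mem_enum.
Qed.

End FiniteSubfield.

Section FermatCurve.
Variables (k : closedFieldType) (p : nat) (hp : p \in [pchar k]).
Local Notation frob := (frob hp).
Local Notation "A ^[ n ]" := (map_mx (frob n) A) (at level 2, format "A ^[ n ]").

Lemma rat_pt_of_frob_eigen n (t : 'cV[k]_3) l :
  (0 < n)%N -> t != 0 -> t^[n] = l *: t -> rat_pt (p ^ n) t.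
Proof.
move=> n_gt0 t0 tn.
have l0 : l != 0.
  by apply: contraNneq t0 => l0; rewrite -(map_mx_eq0 (frob n)) tn l0 scale0r.
have pn1 : (0 < (p ^ n).-1)%N by rewrite -subn1 subn_gt0 (pexpn_gt1 hp).
have [mu mu_l] := closed_field_root (l^-1) pn1.
apply/rat_pt_frobP; exists mu.
  by apply: contraNneq l0 => mu0; rewrite -invr_eq0 -mu_l mu0 expr0n eqn0Ngt pn1.
rewrite map_mxZ tn scalerA; congr (_ *: _).
by rewrite /= /frob -(prednK (pexpn_gt0 hp n)) exprS -mulrA mu_l mulVf ?mulr1.
Qed.

Lemma rat_pt_of_cross_frob n (v : 'cV[k]_3) :
  (0 < n)%N -> v != 0 -> cross v^[n] v = 0 -> rat_pt (p ^ n) v.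
Proof. by move=> n_gt0 v0 /(cross_eq0_scale v0)[l]; exact: rat_pt_of_frob_eigen. Qed.

Lemma dot_frob1_fermat (t : 'cV[k]_3) : on_fermat p t -> dot t t^[1] = 0.
Proof.
rewrite /on_fermat /dot => ht; rewrite -[RHS]ht; apply: eq_bigr => i _.
by rewrite mxE /frob expn1 exprS.
Qed.

(* The Hermitian form [dot s s^[1]] vanishes on the curve; if moreover
   s, s^[2], s^[4] are dependent, then s^[1] is parallel to the line
   [cross s s^[2]], which is itself defined over F_(p^2). *)
Lemma frob_triple_eq0_rat (s : 'cV[k]_3) :
  s != 0 -> dot s s^[1] = 0 -> s^[6] = s -> dot s^[4] (cross s s^[2]) = 0 ->
  rat_pt (p ^ 2) s.
Proof.
move=> s0 s_herm s6 D0; set w := cross s s^[2].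
have [w0 | w_neq0] := eqVneq w 0.
  by apply: rat_pt_of_cross_frob => //; rewrite crossC -/w w0 oppr0.
have rat_w : rat_pt (p ^ 2) w.
  apply: rat_pt_of_cross_frob => //; rewrite map_cross map_mx_frob_comp crossC cross_cross.
  by rewrite [dot w _]dotC D0 [dot w _]dotC dot_crossr !scale0r subrr oppr0.
have s12 : dot s^[1] s^[2] = 0.
  by have := congr1 (frob 1) s_herm; rewrite map_dot rmorph0 map_mx_frob_comp.
have /(cross_eq0_scale w_neq0)[l s1l] : cross s^[1] w = 0.
  by rewrite cross_cross s12 dotC s_herm !scale0r subrr.
have l0 : l != 0.
  by apply: contraNneq s0 => l0; rewrite -(map_mx_eq0 (frob 1)) s1l l0 scale0r.
have -> : s = s^[1]^[5] by rewrite map_mx_frob_comp s6.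
by apply: rat_pt_map_frob; rewrite s1l rat_ptZ.
Qed.

Lemma End_iso_eigenvalue (t : 'cV[k]_3) : t != 0 -> End_iso_Fp6 p t ->
  exists A c, [/\ A^[2] = A, A *m t = c *: t, frob 2 c != c & frob 6 c = c].
Proof.
move=> t0 [F [f [cardF [f1 [fD [fM [_ f_End]]]]]]].
have fB x y : f (x - y) = f x - f y.
  by apply: (addIr (f y)); rewrite -fD !subrK.
have fX x m : f (x ^+ m) = f x ^+ m.
  by elim: m => [|m IH]; rewrite ?expr0 // !exprS fM IH.
have ft_neq0 y : y != 0 -> f y *m t != 0.
  move=> y0; apply: contraNneq t0 => fyt.
  by rewrite -[t]mul1mx -[1%:M]f1 -(mulVf y0) fM -mulmxA [_ *m t]fyt mulmx0.
have [x x2] : exists x : F, x ^+ (p ^ 2) != x.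
  apply: exists_nonfixed_pow; rewrite cardF (pexpn_gt1 hp) //=.
  by rewrite ltn_exp2l ?prime_gt1 ?(pcharf_prime hp).
have [A_Fp2 [c Ac]] := (f_End (f x)).2 (ex_intro _ x erefl).
exists (f x), c; split=> //.
- by apply/matrixP => i j; rewrite mxE; exact: A_Fp2.
- apply: contra_neq (ft_neq0 _ (_ : x ^+ (p ^ 2) - x != 0)) => [c2|]; last by rewrite subr_eq0.
  by rewrite fB mulmxBl fX (eigenvectorX _ Ac) Ac -[c ^+ _]/(frob 2 c) c2 subrr.
- apply: (scalemx_injl t0); rewrite /= -(eigenvectorX _ Ac) -fX.
  by rewrite -cardF expf_card.
Qed.

Lemma rat_pt_of_eigen (t : 'cV[k]_3) A c :
  t != 0 -> A^[2] = A -> A *m t = c *: t -> frob 2 c != c -> frob 6 c = c ->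
  rat_pt (p ^ 6) t.
Proof.
move=> t0 A2 At c2 c6.
pose v (j : 'I_3) := t^[2 * j].
have Av j : A *m v j = frob (2 * j) c *: v j.
  by apply: eigenvector_map_frob => //; exact: map_mx_frob_fixM.
have v0 j : v j != 0 by rewrite map_mx_eq0.
have [|l t6] := eigenvector_unique (frob_orbit_inj c6 c2) v0 Av (j := ord0) (w := t^[2 * 3]).
  rewrite (eigenvector_map_frob (map_mx_frob_fixM 3 A2) At) -[(2 * 3)%N]/6%N c6.
  by rewrite muln0 frob0.
apply: (@rat_pt_of_frob_eigen 6 _ l) => //.
by rewrite t6 /v muln0 map_mx_frob0.
Qed.

Lemma End_iso_rat (t : 'cV[k]_3) : t != 0 -> End_iso_Fp6 p t -> rat_pt (p ^ 6) t.
Proof.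
move=> t0 /(End_iso_eigenvalue t0)[A [c [A2 At c2 c6]]].
exact: rat_pt_of_eigen At c2 c6.
Qed.

Section Representation.
Variable s : 'cV[k]_3.
Hypotheses (s0 : s != 0) (s6 : s^[6] = s) (s_indep : dot s^[4] (cross s s^[2]) != 0).

Definition rep (x : k) := eigen_mx s s^[2] s^[4] x (frob 2 x) (frob 4 x).

Lemma repP x :
  [/\ rep x *m s = x *: s, rep x *m s^[2] = frob 2 x *: s^[2]
    & rep x *m s^[4] = frob 4 x *: s^[4]].
Proof. exact: eigen_mxP. Qed.

Lemma rep_eq A x :
  A *m s = x *: s -> A *m s^[2] = frob 2 x *: s^[2] -> A *m s^[4] = frob 4 x *: s^[4] ->
  A = rep x.
Proof.
case: (repP x) => r0 r2 r4 a0 a2 a4.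
by apply: (eq_mx_on_cols s_indep); rewrite ?r0 ?r2 ?r4.
Qed.

Lemma rep_fixed x : frob 6 x = x -> (rep x)^[2] = rep x.
Proof.
move=> x6; have [r0 r2 r4] := repP x.
have map2 (u : 'cV[k]_3) y :
    rep x *m u = y *: u -> (rep x)^[2] *m u^[2] = frob 2 y *: u^[2].
  by rewrite -map_mxM => ->; rewrite map_mxZ.
apply: rep_eq.
- rewrite -{1}s6 -[6%N]/(4 + 2)%N -map_mx_frob_comp (map2 _ _ r4).
  by rewrite map_mx_frob_comp s6 frob_comp x6.
- exact: map2 _ _ r0.
- by rewrite -[4%N]/(2 + 2)%N -map_mx_frob_comp (map2 _ _ r2) frob_comp.
Qed.

Lemma rep1 : rep 1 = 1.
Proof. by symmetry; apply: rep_eq; rewrite ?rmorph1 scale1r; exact: mul1mx. Qed.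

Lemma repD x y : rep (x + y) = rep x + rep y.
Proof.
have [x0 x2 x4] := repP x; have [y0 y2 y4] := repP y.
by symmetry; apply: rep_eq; rewrite mulmxDl ?x0 ?x2 ?x4 ?y0 ?y2 ?y4 ?rmorphD scalerDl.
Qed.

Lemma repM x y : rep (x * y) = rep x * rep y.
Proof.
have [x0 x2 x4] := repP x; have [y0 y2 y4] := repP y.
symmetry; apply: rep_eq; rewrite -[_ * _]/(_ *m _) -mulmxA;
  by rewrite ?y0 ?y2 ?y4 -scalemxAr ?x0 ?x2 ?x4 scalerA ?rmorphM mulrC.
Qed.

Lemma rep_inj : injective rep.
Proof.
move=> x y /(congr1 (mulmx^~ s)); have [-> _ _] := repP x; have [-> _ _] := repP y.
exact: scalemx_injl.
Qed.

Lemma in_End_rep A : in_End p s A <-> exists2 x, frob 6 x = x & A = rep x.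
Proof.
split=> [[A_Fp2 [x Ax]] | [x x6 ->]]; last first.
  split; last by exists x; case: (repP x).
  by move=> i j; have /matrixP/(_ i j) := rep_fixed x6; rewrite mxE.
have A_fix : A^[2] = A by apply/matrixP => i j; rewrite mxE; exact: A_Fp2.
have Aframe m : A *m s^[2 * m] = frob (2 * m) x *: s^[2 * m].
  by apply: eigenvector_map_frob Ax; exact: map_mx_frob_fixM.
exists x; last by apply: rep_eq; [exact: Ax | exact: Aframe 1%N | exact: Aframe 2%N].
by apply: (scalemx_injl s0); rewrite /= -{1}s6 -[6%N]/(2 * 3)%N -Aframe s6 Ax.
Qed.

Lemma rep_End_iso : End_iso_Fp6 p s.
Proof.
exists (GF hp 5 : finFieldType), (fun y => rep (gf_val y)).
split; first exact: card_GF.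
split; first exact: rep1.
split; first by move=> x y; exact: repD.
split; first by move=> x y; exact: repM.
split; first by move=> x y /rep_inj; exact: val_inj.
move=> A; rewrite in_End_rep; split=> [[x x6 ->] | [y <-]].
  have x5 : x \in frob_fixed hp 5 by rewrite unfold_in /frob_fixed /= x6.
  by exists (MkGF x5).
by exists (gf_val y) => //; apply/eqP; exact: gf_valP.
Qed.

End Representation.

End FermatCurve.

Section Rescaling.
Variables (k : fieldType) (p : nat) (c : k) (t : 'cV[k]_3).
Hypothesis c0 : c != 0.

Lemma on_fermatZ : on_fermat p t -> on_fermat p (c *: t).
Proof.
rewrite /on_fermat => ht; under eq_bigr do rewrite mxE exprMn.
by rewrite -mulr_sumr ht mulr0.
Qed.

Lemma in_EndZ A : in_End p (c *: t) A <-> in_End p t A.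
Proof.
split=> -[A2 [e Ae]]; split=> //; exists e.
  by apply: (scalerI c0); rewrite scalemxAr Ae !scalerA mulrC.
by rewrite -scalemxAr Ae !scalerA mulrC.
Qed.

Lemma End_iso_Fp6Z : End_iso_Fp6 p (c *: t) -> End_iso_Fp6 p t.
Proof.
move=> [F [f [? [? [? [? [? f_End]]]]]]].
exists F, f; do 5 (split=> //).
by move=> A; rewrite -in_EndZ f_End.
Qed.

End Rescaling.

Lemma rat_End_iso (k : closedFieldType) p (hp : p \in [pchar k]) (t : 'cV[k]_3) :
  t != 0 -> on_fermat p t -> ~ rat_pt (p ^ 2) t -> rat_pt (p ^ 6) t -> End_iso_Fp6 p t.
Proof.
move=> t0 tC t2 /(rat_pt_frobP hp)[c c0 t6]; apply: (End_iso_Fp6Z c0).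
have s0 : c *: t != 0 by rewrite scalemx_eq0 negb_or c0.
apply: (rep_End_iso s0 t6); apply/eqP => D0; apply: t2.
rewrite -(rat_ptZ _ _ c0); apply: frob_triple_eq0_rat => //.
exact/dot_frob1_fermat/on_fermatZ.
Qed.

Theorem lemma3p13 (k : closedFieldType) (p : nat) (hp : p \in [pchar k])
  (t : 'cV[k]_3) (ht0 : t != 0) (htC : on_fermat p t)
  (ht2 : ~ rat_pt (p ^ 2)%N t) :
  End_iso_Fp6 p t <-> rat_pt (p ^ 6)%N t.
Proof. by split; [exact: End_iso_rat | exact: rat_End_iso]. Qed.
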